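(* Let $\alpha,\beta,m,u$ be positive integers with $\alpha=2^u\beta$, $\beta$ odd and $\gcd(\alpha,m)=1$. Let $G := C_m\rtimes C_\alpha$, where $C_m=\langle a\rangle$, $C_\alpha=\langle x\rangle$ and $x^{-1}ax=a^{-1}$. Then the number of cyclic subgroups of $G$ equals $d(|G|)+d(\beta)\,(m-d(m))$.
   Context: $C_k$ denotes the cyclic group of order $k$; $d(k)$ denotes the number of positive divisors of $k$. *)

From mathcomp Require Import all_boot all_fingroup all_solvable.
Set Implicit Arguments. Unset Strict Implicit. Unset Printing Implicit Defensive.

Definition ndivisors (k : nat) : nat := size (divisors k).

Definition num_cyclic_subgroups (gT : finGroupType) (G : {set gT}) : nat :=
  #|[set H : {group gT} | (H \subset G) && cyclic H]|.

From mathcomp Require Import all_boot all_fingroup all_solvable.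
From mathcomp Require Import zify.
Set Implicit Arguments. Unset Strict Implicit. Unset Printing Implicit Defensive.

(* Since x^2 centralises a and #[a] is coprime to #[x], N := <[a x^2]> is the
   cyclic group <[a]> * <[x^2]> of order m alpha/2; it consists of the
   a^i x^j with j even and contributes its d(m alpha/2) subgroups. For odd j
   the power map (a^i x^j)^k = a^(i * odd k) x^(j k) shows that
   <[a^i x^j]> = <[a^i x^e]> with e = gcd(alpha, j), and that these groups
   are pairwise distinct for the d(beta) odd divisors e of alpha and the m
   residues i. Multiplicativity of d turns d(m alpha/2) + m d(beta) into
   d(m alpha) + d(beta) (m - d(m)). *)

Lemma ndivisorsM p q : 0 < p -> 0 < q -> coprime p q ->
  ndivisors (p * q) = ndivisors p * ndivisors q.
Proof.
move=> p_gt0 q_gt0 co_pq; rewrite /ndivisors -(size_allpairs muln).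
have co_dvd d e : d %| p -> e %| q -> coprime d e.
  by move=> d_p e_q; apply: (coprime_dvdl d_p); apply: (coprime_dvdr e_q).
apply/perm_size/uniq_perm; first exact: divisors_uniq.
- apply: allpairs_uniq; try exact: divisors_uniq.
  move=> _ _ /allpairsP[[d e] [/= d_p e_q ->]]
         /allpairsP[[d' e'] [/= d_p' e_q' ->]] /= de_eq.
  rewrite -!dvdn_divisors // in d_p e_q d_p' e_q'.
  have dd' : d = d'.
    apply/eqP; rewrite eqn_dvd -(Gauss_dvdl _ (co_dvd _ _ d_p e_q')) -de_eq.
    by rewrite dvdn_mulr //= -(Gauss_dvdl _ (co_dvd _ _ d_p' e_q)) de_eq dvdn_mulr.
  rewrite -dd' in de_eq *; congr (_, _); apply/eqP.
  by rewrite -(eqn_pmul2l (dvdn_gt0 p_gt0 d_p)) de_eq.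
move=> n; rewrite -dvdn_divisors ?muln_gt0 ?p_gt0 //.
apply/idP/allpairsP => [n_pq | [[d e] [/= d_p e_q ->]]]; last first.
  by rewrite -!dvdn_divisors // in d_p e_q; apply: dvdn_mul.
exists (gcdn n p, gcdn n q); rewrite /= -!dvdn_divisors ?dvdn_gcdr //.
split=> //; apply/eqP; rewrite eqn_dvd; apply/andP; split.
  rewrite muln_gcdl !muln_gcdr !dvdn_gcd n_pq.
  by rewrite !(dvdn_mulr _ (dvdnn n)) !(dvdn_mull _ (dvdnn n)).
by rewrite Gauss_dvd ?dvdn_gcdl // co_dvd ?dvdn_gcdr.
Qed.

Lemma ndivisors_pfactor p k : prime p -> ndivisors (p ^ k) = k.+1.
Proof.
move=> p_pr; rewrite /ndivisors -[RHS](size_iota 0 k.+1).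
rewrite -(size_map (expn p) (iota _ _)); apply/perm_size/uniq_perm.
- exact: divisors_uniq.
- rewrite map_inj_uniq ?iota_uniq // => i j /eqP.
  by rewrite eqn_exp2l ?prime_gt1 // => /eqP.
move=> d; rewrite -dvdn_divisors ?expn_gt0 ?prime_gt0 //.
apply/(dvdn_pfactor _ _ p_pr)/mapP => [[i ik ->] | [i]].
  by exists i; rewrite ?mem_iota.
by rewrite mem_iota => /andP[_ ik] ->; exists i.
Qed.

Lemma ndivisors_leq n : 0 < n -> ndivisors n <= n.
Proof.
move=> n_gt0; rewrite /ndivisors -[leqRHS](size_iota 1 n).
apply: uniq_leq_size; first exact: divisors_uniq.
move=> d; rewrite -dvdn_divisors // mem_iota => dn.
by rewrite (dvdn_gt0 n_gt0 dn) add1n ltnS dvdn_leq.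
Qed.

Lemma count_odd_divisors k b :
  odd b -> count odd (divisors (2 ^ k * b)) = ndivisors b.
Proof.
move=> b_odd; have b_gt0 : 0 < b by case: b b_odd.
rewrite -size_filter; apply/perm_size/uniq_perm.
- exact/filter_uniq/divisors_uniq.
- exact: divisors_uniq.
move=> d; rewrite mem_filter -!dvdn_divisors ?muln_gt0 ?expn_gt0 ?b_gt0 //.
apply/andP/idP => [[d_odd] | db]; last by rewrite (dvdn_odd db b_odd) dvdn_mull.
by rewrite Gauss_dvdr // coprimeXr // coprimen2 d_odd.
Qed.

Lemma ndivisors_mul_2expM m k b : odd m -> odd b -> coprime m b ->
  ndivisors (m * (2 ^ k * b)) = ndivisors m * k.+1 * ndivisors b.
Proof.
move=> m_odd b_odd co_mb.
have [m_gt0 b_gt0] : 0 < m /\ 0 < b by split; [case: (m) m_odd | case: (b) b_odd].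
rewrite ndivisorsM ?muln_gt0 ?expn_gt0 ?m_gt0 ?b_gt0 //; last first.
  by rewrite coprimeMr co_mb coprimeXr // coprimen2 m_odd.
by rewrite ndivisorsM ?expn_gt0 ?coprimeXl ?coprime2n // ndivisors_pfactor // mulnA.
Qed.

Section SubgroupsOfCycle.
Local Open Scope group_scope.
Variables (gT : finGroupType) (g : gT).

Lemma card_subgroups_cycle :
  #|[set H : {group gT} | H \subset <[g]>]| = ndivisors #[g].
Proof.
rewrite cardE /ndivisors -(size_map (fun H : {group gT} => #|H|)).
apply/perm_size/uniq_perm; [| exact: divisors_uniq |].
  rewrite map_inj_in_uniq ?enum_uniq // => H K.
  rewrite !mem_enum !inE => sHg sKg eqHK.
  by apply/val_inj/eqP; rewrite (eq_subG_cyclic (cycle_cyclic g)) // eqHK.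
move=> d; rewrite -dvdn_divisors ?order_gt0 //; apply/mapP/idP => [[H] | d_g].
  by rewrite mem_enum inE => sHg ->; apply: cardSg.
have := cycle_sub_group d_g; set K := <[_]>%G => defK.
have : K \in [set H : {group gT} | H \subset <[g]> & #|H| == d].
  by rewrite defK set11.
by rewrite inE => /andP[sKg /eqP <-]; exists K; rewrite ?mem_enum ?inE.
Qed.

End SubgroupsOfCycle.

Section CycleInvertedByX.
Local Open Scope group_scope.
Variables (gT : finGroupType) (a x : gT).
Hypothesis ax_inv : a ^ x = a^-1.

Lemma conjg_cycle_expx c n :
  c \in <[a]> -> c ^ (x ^+ n) = if odd n then c^-1 else c.
Proof.
case/cycleP=> i ->; elim: n => [|n IHn]; first by rewrite conjg1.
rewrite expgSr conjgM IHn /=.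
by case: (odd n); rewrite /= ?conjVg conjXg ax_inv expVgn ?invgK.
Qed.

Lemma expx_mul_cycle c n : c \in <[a]> ->
  x ^+ n * c = (if odd n then c^-1 else c) * x ^+ n.
Proof.
move=> ca; have c'a : (if odd n then c^-1 else c) \in <[a]>.
  by case: (odd n); rewrite ?groupV.
by rewrite [RHS]conjgC (conjg_cycle_expx n c'a); case: (odd n); rewrite ?invgK.
Qed.

Lemma commute_a_x2 : commute a (x ^+ 2).
Proof. by rewrite /commute (expx_mul_cycle 2 (cycle_id a)). Qed.

Lemma expg_ax_odd i j k : odd j ->
  (a ^+ i * x ^+ j) ^+ k = a ^+ (i * odd k) * x ^+ (j * k).
Proof.
move=> j_odd; elim: k => [|k IHk]; first by rewrite !muln0 !expg0 mulg1.
rewrite expgSr IHk -!mulgA (mulgA (x ^+ _)) (expx_mul_cycle _ (mem_cycle a i)).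
rewrite oddM j_odd /= mulnS addnC expgD !mulgA; case: (odd k) => /=.
  by rewrite muln1 mulgV muln0 mul1g.
by rewrite muln0 muln1 mul1g.
Qed.

Variable G : {group gT}.
Hypotheses (mulG_ax : <[a]> * <[x]> = G) (tiG_ax : <[a]> :&: <[x]> = 1).
Hypothesis ox_even : ~~ odd #[x].

Lemma eq_mul_ax i j i' j' : a ^+ i * x ^+ j = a ^+ i' * x ^+ j' ->
  a ^+ i = a ^+ i' /\ x ^+ j = x ^+ j'.
Proof.
move=> eq_ax; have eq_a : (a ^+ i')^-1 * a ^+ i = x ^+ j' * (x ^+ j)^-1.
  by rewrite -{1}(mulgK (x ^+ j) (a ^+ i)) eq_ax -!mulgA mulKg.
have : (a ^+ i')^-1 * a ^+ i \in <[a]> :&: <[x]>.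
  by rewrite inE groupM ?groupV ?mem_cycle //= eq_a groupM ?groupV ?mem_cycle.
rewrite tiG_ax => /set1P/(canRL (mulKVg _)); rewrite mulg1 => Ea.
by move: eq_ax; rewrite Ea => /mulgI.
Qed.

Lemma odd_expx_eq j j' : x ^+ j = x ^+ j' -> odd j = odd j'.
Proof.
move/eqP; rewrite eq_expg_mod_order => /eqP Ejj'.
by rewrite -(odd_mod j (negbTE ox_even)) Ejj' odd_mod ?(negbTE ox_even).
Qed.

Lemma mem_cycle_ax_odd i e i' e' : odd e -> odd e' ->
  a ^+ i * x ^+ e \in <[a ^+ i' * x ^+ e']> ->
  a ^+ i = a ^+ i' /\ x ^+ e \in <[x ^+ e']>.
Proof.
move=> e_odd e'_odd /cycleP[k]; rewrite expg_ax_odd // => /eq_mul_ax[Ea Ex].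
have k_odd : odd k by move: (odd_expx_eq Ex); rewrite oddM e_odd e'_odd.
by rewrite k_odd muln1 in Ea; split; rewrite ?Ex ?expgM ?mem_cycle.
Qed.

Definition cycle_ax e i : {group gT} := <[a ^+ i * x ^+ e]>%G.

Lemma cycle_ax_inj e i e' i' : odd e -> odd e' -> e %| #[x] -> e' %| #[x] ->
  i < #[a] -> i' < #[a] -> cycle_ax e i = cycle_ax e' i' -> e = e' /\ i = i'.
Proof.
move=> e_odd e'_odd e_x e'_x i_a i'_a /(congr1 val) /= eq_cyc.
have [eq_ai ex_sub] : a ^+ i = a ^+ i' /\ x ^+ e \in <[x ^+ e']>.
  by apply: mem_cycle_ax_odd; rewrite // -eq_cyc cycle_id.
have [_ e'x_sub] : a ^+ i' = a ^+ i /\ x ^+ e' \in <[x ^+ e]>.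
  by apply: mem_cycle_ax_odd; rewrite // eq_cyc cycle_id.
split; last by apply/eqP; move/eqP: eq_ai; rewrite eq_expg_mod_order !modn_small.
have cyc_eq : <[x ^+ e]> = <[x ^+ e']>.
  by apply/eqP; rewrite eqEsubset !cycle_subG ex_sub.
have : #[x ^+ e] = #[x ^+ e'] by rewrite /order cyc_eq.
rewrite !orderXdiv // => ox_div.
have q_gt0 : 0 < #[x] %/ e'.
  by rewrite divn_gt0 ?(dvdn_gt0 (order_gt0 x) e'_x) // dvdn_leq.
by apply/eqP; rewrite -(eqn_pmul2l q_gt0) -{1}ox_div !divnK.
Qed.

Lemma cycle_ax_gcd i j : odd j ->
  <[a ^+ i * x ^+ j]> = <[a ^+ i * x ^+ gcdn #[x] j]>.
Proof.
move=> j_odd; set e := gcdn #[x] j; have e_j : e %| j := dvdn_gcdr _ _.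
have e_odd : odd e := dvdn_odd e_j j_odd.
have je_odd : odd (j %/ e) by move: j_odd; rewrite -{1}(divnK e_j) oddM => /andP[].
have cyc_eq : <[x ^+ j]> = <[x ^+ e]>.
  apply/eqP; rewrite (eq_subG_cyclic (cycle_cyclic x)) ?cycleX //.
  by rewrite -!orderE orderXgcd orderXdiv ?dvdn_gcdl.
apply/eqP; rewrite eqEsubset !cycle_subG; apply/andP; split.
  apply/cycleP; exists (j %/ e).
  by rewrite expg_ax_odd // je_odd muln1 mulnC divnK.
have /cycleP[k] : x ^+ e \in <[x ^+ j]> by rewrite cyc_eq cycle_id.
rewrite -expgM => ek.
have k_odd : odd k by move: (odd_expx_eq ek); rewrite oddM j_odd e_odd.
by apply/cycleP; exists k; rewrite expg_ax_odd // k_odd muln1 ek.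
Qed.

Hypothesis coprime_ax : coprime #[a] #[x].

Lemma order_x2 : #[x ^+ 2] = #[x] %/ 2.
Proof. by rewrite orderXdiv // dvdn2. Qed.

Lemma coprime_order_a_x2 : coprime #[a] #[x ^+ 2].
Proof.
by rewrite order_x2; apply: coprime_dvdr coprime_ax; rewrite dvdn_div ?dvdn2.
Qed.

Lemma order_ax2 : #[a * x ^+ 2] = (#[a] * (#[x] %/ 2))%N.
Proof. by rewrite (orderM commute_a_x2 coprime_order_a_x2) order_x2. Qed.

Lemma mem_cycle_ax2 i j : (a ^+ i * x ^+ j \in <[a * x ^+ 2]>) = ~~ odd j.
Proof.
rewrite (cycleM commute_a_x2 coprime_order_a_x2).
apply/idP/idP => [/mulsgP[_ _ /cycleP[k ->] /cycleP[l ->]] | j_even].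
  by rewrite -expgM => /eq_mul_ax[_ /odd_expx_eq ->]; rewrite oddM.
rewrite -(odd_double_half j) (negbTE j_even) add0n -muln2 mulnC expgM.
exact: mem_mulg (mem_cycle _ _) (mem_cycle _ _).
Qed.

Lemma cyclic_notin_ax2_cycle_ax (H : {group gT}) : H \subset G -> cyclic H ->
    ~~ (H \subset <[a * x ^+ 2]>) ->
  exists e i, [/\ odd e, e %| #[x], i < #[a] & H = cycle_ax e i].
Proof.
move=> sHG /cyclicP[g defH] notsHN.
have : g \in G by rewrite -cycle_subG -defH.
rewrite -mulG_ax => /mulsgP[_ _ /cycleP[i ->] /cycleP[j ->] def_g].
have j_odd : odd j.
  by apply: contraNT notsHN => j_even; rewrite defH cycle_subG def_g mem_cycle_ax2.
exists (gcdn #[x] j), (i %% #[a]); split.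
- exact: dvdn_odd (dvdn_gcdr _ _) j_odd.
- exact: dvdn_gcdl.
- by rewrite ltn_pmod.
by apply: val_inj; rewrite /= defH def_g expg_mod_order [LHS]cycle_ax_gcd.
Qed.

Lemma cycle_ax_notin_ax2 e i : odd e ->
  [&& cycle_ax e i \subset G, cyclic (cycle_ax e i)
    & ~~ (cycle_ax e i \subset <[a * x ^+ 2]>)].
Proof.
move=> e_odd; rewrite !cycle_subG mem_cycle_ax2 e_odd cycle_cyclic.
by rewrite -mulG_ax mem_mulg ?mem_cycle.
Qed.

Lemma card_cyclic_notin_ax2 :
  #|[set H : {group gT} | [&& H \subset G, cyclic H
                            & ~~ (H \subset <[a * x ^+ 2]>)]]|
    = (count odd (divisors #[x]) * #[a])%N.
Proof.
rewrite cardE -size_filter -[in RHS](size_iota 0 #[a]).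
rewrite -(size_allpairs cycle_ax).
apply/perm_size/uniq_perm; first exact: enum_uniq.
  apply: allpairs_uniq; [exact/filter_uniq/divisors_uniq | exact: iota_uniq |].
  move=> _ _ /allpairsP[[e i] [/= e_x i_a ->]]
         /allpairsP[[e' i'] [/= e'_x i'_a ->]].
  rewrite !mem_filter -!dvdn_divisors // !mem_iota !add0n in e_x i_a e'_x i'_a.
  case/andP: e_x => e_odd e_x; case/andP: e'_x => e'_odd e'_x.
  by move=> /= /cycle_ax_inj[] // -> ->.
move=> H; rewrite mem_enum inE.
apply/idP/allpairsP => [/and3P[sHG cycH notsHN] |].
  have [e [i [e_odd e_x i_a ->]]] := cyclic_notin_ax2_cycle_ax sHG cycH notsHN.
  by exists (e, i); rewrite mem_filter -dvdn_divisors // mem_iota e_odd e_x.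
case=> [[e i] [/= /[!mem_filter]/andP[e_odd _] _ ->]].
exact: cycle_ax_notin_ax2.
Qed.

Lemma num_cyclic_subgroups_ax :
  num_cyclic_subgroups G
    = (ndivisors #[a * x ^+ 2] + count odd (divisors #[x]) * #[a])%N.
Proof.
have sNG : <[a * x ^+ 2]> \subset G.
  by rewrite cycle_subG -mulG_ax mem_mulg ?mem_cycle // -[a]expg1 mem_cycle.
set subN := [set H : {group gT} | H \subset <[a * x ^+ 2]>].
rewrite /num_cyclic_subgroups -(cardsID subN).
rewrite -card_cyclic_notin_ax2 -card_subgroups_cycle; congr (_ + _)%N.
  apply: eq_card => H; rewrite !inE andbC; apply: andb_idr => sHN.
  by rewrite (subset_trans sHN sNG) (cyclicS sHN (cycle_cyclic _)).
by apply: eq_card => H; rewrite !inE andbC -andbA.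
Qed.

End CycleInvertedByX.

Theorem proposition5p1 (alpha beta m u : nat) (gT : finGroupType)
    (G : {group gT}) (a x : gT) :
  0 < alpha -> 0 < beta -> 0 < m -> 0 < u ->
  alpha = 2 ^ u * beta -> odd beta -> coprime alpha m ->
  #[a]%g = m -> #[x]%g = alpha ->
  (<[a]> ><| <[x]>)%g = G ->
  (a ^ x = a^-1)%g ->
  num_cyclic_subgroups G = ndivisors #|G| + ndivisors beta * (m - ndivisors m).
Proof.
move=> _ _ m_gt0 u_gt0 def_alpha beta_odd co_alpha_m oa ox sdG ax_inv.
have [_ mulG _ tiG] := sdprodP sdG.
have cardG : #|G| = m * alpha by rewrite -(sdprod_card sdG) -!orderE oa ox.
have co_ax : coprime #[a]%g #[x]%g by rewrite oa ox coprime_sym.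
have [k def_u] : exists k, u = k.+1 by exists u.-1; rewrite prednK.
have ox_even : ~~ odd #[x]%g by rewrite ox def_alpha def_u oddM oddX.
have [m_odd co_m_beta] : odd m /\ coprime m beta.
  move: co_alpha_m; rewrite coprime_sym def_alpha coprimeMr coprime_pexpr //.
  by rewrite coprimen2 => /andP.
rewrite (num_cyclic_subgroups_ax ax_inv mulG tiG ox_even co_ax).
rewrite (order_ax2 ax_inv ox_even co_ax) oa ox cardG def_alpha def_u.
have -> : 2 ^ k.+1 * beta %/ 2 = 2 ^ k * beta by rewrite expnS -mulnA mulKn.
rewrite count_odd_divisors // !ndivisors_mul_2expM //.
have := ndivisors_leq m_gt0; nia.
Qed.
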